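(* Let $G$ be a connected graph with at least $2$ vertices and let $T$ be a minimum connecting transition set of $G$. Then $|T|\ge \frac{2}{3}\tau(G)$, where $$\tau(G)=\sum_{C}\begin{cases}|C|-2 & \text{if } G[C] \text{ is connected},\\ |C|-1 & \text{otherwise},\end{cases}$$ the sum ranging over all co-connected components $C$ of $G$ with $|C|\ge 2$. (Together with the existence of a connecting transition set of size $\tau(G)$, this gives a polynomial-time $\frac32$-approximation.)
   Context: All graphs are finite, simple and undirected. $G[X]$ denotes the subgraph induced by $X\subseteq V(G)$. The complement $\bar G$ has vertex set $V(G)$ and an edge $xy$ ($x\ne y$) iff $xy\notin E(G)$. A co-connected component of $G$ is (the vertex set of) a connected component of $\bar G$. A transition of a graph $G$ is an unordered pair $\{ab,bc\}$ of two distinct edges of $G$ sharing the vertex $b$ (so $a\neq c$); it is written $abc$. A walk in $G$ is a sequence $(v_1,\dots,v_k)$ of vertices with $v_iv_{i+1}\in E(G)$ for all $i\le k-1$; it leads from $v_1$ to $v_k$. For a set $T$ of transitions of $G$, a walk $(v_1,\dots,v_k)$ is $T$-compatible if for every $i\in[1,k-2]$, either $v_i=v_{i+2}$ or $v_iv_{i+1}v_{i+2}\in T$. The graph $G$ is $T$-connected, and $T$ is a connecting transition set of $G$, if for all vertices $u,v$ of $G$ there is a $T$-compatible walk leading from $u$ to $v$. A minimum connecting transition set is one of minimum cardinality. *)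

From mathcomp Require Import all_boot.
Set Implicit Arguments. Unset Strict Implicit. Unset Printing Implicit Defensive.

Definition simple_graph (V : finType) (e : rel V) : Prop :=
  symmetric e /\ irreflexive e.

(* A transition {ab, bc} (a <> c, ab, bc edges) is encoded as the pair
   (b, {a, c}) : middle vertex and the 2-set of outer endpoints. This is a
   bijective encoding of unordered pairs of distinct edges sharing b. *)
Definition is_transition (V : finType) (e : rel V) (t : V * {set V}) : Prop :=
  exists a c, [/\ a != c, e a t.1, e t.1 c & t.2 = [set a; c]].

Definition transition_set (V : finType) (e : rel V) (T : {set V * {set V}}) : Prop :=
  forall t, t \in T -> is_transition e t.

Definition trans_of (V : finType) (a b c : V) : V * {set V} := (b, [set a; c]).

Fixpoint compat (V : finType) (T : {set V * {set V}}) (s : seq V) : bool :=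
  match s with
  | a :: ((b :: c :: _) as s') =>
      ((a == c) || (trans_of a b c \in T)) && compat T s'
  | _ => true
  end.

Definition T_connected (V : finType) (e : rel V) (T : {set V * {set V}}) : Prop :=
  forall u v : V, exists p : seq V,
    path e u p /\ last u p = v /\ compat T (u :: p).

Definition connecting_transition_set (V : finType) (e : rel V)
    (T : {set V * {set V}}) : Prop :=
  transition_set e T /\ T_connected e T.

Definition min_connecting_transition_set (V : finType) (e : rel V)
    (T : {set V * {set V}}) : Prop :=
  connecting_transition_set e T /\
  forall T' : {set V * {set V}}, connecting_transition_set e T' -> #|T| <= #|T'|.

Definition graph_connected (V : finType) (e : rel V) : Prop :=
  forall u v : V, connect e u v.

Definition compl_rel (V : finType) (e : rel V) : rel V :=
  [rel x y | (x != y) && ~~ e x y].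

Definition co_components (V : finType) (e : rel V) : {set {set V}} :=
  [set [set y | connect (compl_rel e) x y] | x : V].

Definition induced_connected (V : finType) (e : rel V) (C : {set V}) : bool :=
  [forall x in C, forall y in C,
     connect [rel u w | [&& e u w, u \in C & w \in C]] x y].

Definition tau (V : finType) (e : rel V) : nat :=
  \sum_(C in co_components e | 2 <= #|C|)
     (if induced_connected e C then #|C| - 2 else #|C| - 1).

From mathcomp Require Import all_boot zify.

Set Implicit Arguments. Unset Strict Implicit. Unset Printing Implicit Defensive.

(* Glue two edges of G whenever they form a transition of T.  A T-compatible walk never
   leaves a glued class, so the two ends of every non-edge of G lie in the vertex set C of a
   single class.  Each gluing costs one transition and merges two classes sharing a vertex,
   hence sum_C (|C| - 2) <= |T|.  Inside each C, at most (3|C| - 6)/2 vertex pairs (a star if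
   |C| >= 4, the only non-edge if |C| = 3) generate an equivalence relating the ends of every
   non-edge in C.  All these pairs together therefore connect each co-connected component,
   so their number is at least |V| - #components of the complement >= tau(G). *)

Section UniteSeq.
Variable X : finType.

(* A functional union-find: [g] maps each element to the representative of its class, and
   [unite g p] redirects the class of [p.1] to the representative of [p.2]. *)
Definition unite (g : X -> X) (p : X * X) : X -> X :=
  fun z => if g z == g p.1 then g p.2 else g z.

Definition unite_seq (s : seq (X * X)) : X -> X := foldl unite id s.

Lemma unite_seq_rcons s p : unite_seq (rcons s p) = unite (unite_seq s) p.
Proof. by rewrite /unite_seq foldl_rcons. Qed.

Lemma unite_seq_mem s p : p \in s -> unite_seq s p.1 = unite_seq s p.2.
Proof.
elim/last_ind: s => [//|s q IHs].
rewrite mem_rcons in_cons unite_seq_rcons /unite => /orP[/eqP->|/IHs-> //].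
by rewrite eqxx; case: ifP.
Qed.

Lemma card_unite_imset g p (D : {set X}) : #|g @: D| <= #|unite g p @: D| + 1.
Proof.
rewrite (cardsD1 (g p.1)) addnC leq_add ?leq_b1 //; apply: subset_leq_card.
apply/subsetP => w /setD1P[gz_neq /imsetP[z zD gzE]]; subst w; apply/imsetP; exists z => //.
by rewrite /unite (negbTE gz_neq).
Qed.

Lemma card_unite_seq_imset s (D : {set X}) : #|D| <= #|unite_seq s @: D| + size s.
Proof.
elim/last_ind: s => [|s p IHs]; first by rewrite imset_id addn0.
rewrite unite_seq_rcons size_rcons.
have := card_unite_imset (unite_seq s) p D; lia.
Qed.

End UniteSeq.

Section CoverFiber.
Variables (X Y : finType) (W : X -> {set Y}) (D : {set X}).

Definition cover_fiber (g : X -> X) (r : X) : {set Y} :=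
  \bigcup_(z in D | g z == r) W z.

Definition overlapping (p : X * X) : bool :=
  [&& p.1 \in D, p.2 \in D & W p.1 :&: W p.2 != set0].

Lemma sub_cover_fiber g z : z \in D -> W z \subset cover_fiber g (g z).
Proof. by move=> zD; apply: (bigcup_sup z); rewrite zD eqxx. Qed.

Lemma cover_fiber_other g z0 :
  z0 \in D -> #|W z0| < #|cover_fiber g (g z0)| ->
  exists2 z, (z \in D) && (g z == g z0) & z != z0.
Proof.
move=> z0D lt_W_cover.
case: (boolP [exists z, [&& z \in D, g z == g z0 & z != z0]]).
  by case/existsP => z /and3P[zD gz zz0]; exists z; rewrite ?zD.
move/existsPn => no_other; suff /subset_leq_card : cover_fiber g (g z0) \subset W z0.
  by rewrite leqNgt lt_W_cover.
apply/bigcupsP => z /andP[zD gz].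
by move: (no_other z); rewrite zD gz /= negbK => /eqP->.
Qed.

Lemma eq_cover_fiber g g' : g =1 g' -> cover_fiber g =1 cover_fiber g'.
Proof. by move=> eq_g r; apply: eq_bigl => z; rewrite eq_g. Qed.

Section UniteStep.
Variables (g : X -> X) (p : X * X).
Local Notation a := (g p.1).
Local Notation b := (g p.2).
Hypothesis ab : a != b.

Lemma unite_imset_neq : p.2 \in D -> unite g p @: D = (g @: D) :\ a.
Proof.
move=> p2D; apply/setP => w; rewrite in_setD1; apply/imsetP/andP => [[z zD ->]|].
  rewrite /unite; case: ifP => [_|/negbT gz]; last by rewrite gz imset_f.
  by rewrite eq_sym ab imset_f.
by move=> [wa /imsetP[z zD wE]]; exists z; rewrite // /unite -wE (negbTE wa).
Qed.

Lemma cover_fiber_unite_target :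
  cover_fiber (unite g p) b = cover_fiber g a :|: cover_fiber g b.
Proof.
apply/setP => y; rewrite /cover_fiber; apply/bigcupP/setUP => [[z /andP[zD]]|].
  rewrite /unite; case: (eqVneq (g z) a) => [gz _|_ gz] yz.
    by left; apply/bigcupP; exists z; rewrite ?zD ?gz ?eqxx.
  by right; apply/bigcupP; exists z; rewrite ?zD.
case=> /bigcupP[z /andP[zD /eqP gz] yz]; exists z; rewrite // zD /unite gz ?eqxx //.
by rewrite if_same eqxx.
Qed.

Lemma cover_fiber_unite_other r :
  r != a -> r != b -> cover_fiber (unite g p) r = cover_fiber g r.
Proof.
move=> ra rb; apply: eq_bigl => z; rewrite /unite.
by case: (eqVneq (g z) a) => [->|//]; rewrite eq_sym (negbTE rb) eq_sym (negbTE ra).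
Qed.

End UniteStep.

(* Two classes whose covers meet are merged: the sum of the cover sizes drops by at least
   one, the number of classes by exactly one. *)
Lemma cover_fiber_unite_le g p : overlapping p ->
  \sum_(r in unite g p @: D) #|cover_fiber (unite g p) r| + #|g @: D| <=
  \sum_(r in g @: D) #|cover_fiber g r| + #|unite g p @: D|.
Proof.
case/and3P => p1D p2D /set0Pn[y y12].
case: (eqVneq (g p.1) (g p.2)) => [same|ab].
  have eq_g : unite g p =1 g by move=> z; rewrite /unite same; case: eqP => [->|].
  rewrite (eq_imset _ eq_g) leq_add2r; apply: eq_leq.
  by apply: eq_bigr => r _; rewrite (eq_cover_fiber eq_g).
have aI : g p.1 \in g @: D by exact: imset_f.
have bI : g p.2 \in (g @: D) :\ g p.1 by rewrite in_setD1 eq_sym ab imset_f.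
have meet : 0 < #|cover_fiber g (g p.1) :&: cover_fiber g (g p.2)|.
  apply/card_gt0P; exists y; move: y y12; apply/subsetP.
  by apply: setISS; apply: sub_cover_fiber.
rewrite (unite_imset_neq ab p2D) (big_setD1 _ aI) (cardsD1 (g p.1) (g @: D)) aI.
rewrite !(big_setD1 _ bI) /= cover_fiber_unite_target //.
have -> : \sum_(r in (g @: D) :\ g p.1 :\ g p.2) #|cover_fiber (unite g p) r| =
          \sum_(r in (g @: D) :\ g p.1 :\ g p.2) #|cover_fiber g r|.
  by apply: eq_bigr => r; rewrite !in_setD1 => /and3P[rb ra _]; rewrite cover_fiber_unite_other.
have := cardsUI (cover_fiber g (g p.1)) (cover_fiber g (g p.2)); lia.
Qed.

Lemma cover_fiber_unite_seq s : all overlapping s ->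
  \sum_(r in unite_seq s @: D) #|cover_fiber (unite_seq s) r| + #|D| <=
  \sum_(z in D) #|W z| + #|unite_seq s @: D|.
Proof.
elim/last_ind: s => [_|s p IHs].
  rewrite imset_id; apply: leq_add => //; apply: eq_leq; apply: eq_bigr => z zD.
  suff -> : cover_fiber (unite_seq [::]) z = W z by [].
  apply/setP => y; apply/bigcupP/idP => [[z' /andP[_ /eqP <-]] //|yz].
  by exists z; rewrite // zD eqxx.
rewrite all_rcons unite_seq_rcons => /andP[ovp /IHs].
have := cover_fiber_unite_le (unite_seq s) ovp; lia.
Qed.

End CoverFiber.

Section ThreeSet.
Variables (T : finType) (S : {set T}).
Hypothesis S3 : #|S| = 3.

Lemma two_subset_setD1 (A : {set T}) :
  A \subset S -> #|A| = 2 -> exists2 w, w \in S & A = S :\ w.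
Proof.
move=> AS A2; have /cards1P[w wE] : #|S :\: A| == 1 by rewrite cardsD (setIidPr AS) A2 S3.
exists w; first by have := set11 w; rewrite -wE => /setDP[].
by rewrite -wE setDDr setDv set0U (setIidPr AS).
Qed.

Lemma eq_setD1 x y : x \in S -> (S :\ x == S :\ y) = (x == y).
Proof.
move=> xS; apply/eqP/eqP => [xy|-> //]; apply/eqP; apply: contraT => /negbTE neq.
by have := setD11 x S; rewrite xy in_setD1 neq xS.
Qed.

Lemma eq_two_subsets (A B C D : {set T}) :
  all (fun X : {set T} => (X \subset S) && (#|X| == 2)) [:: A; B; C; D] ->
  A != B -> C \notin [set A; B] -> D \notin [set A; B] -> C = D.
Proof.
rewrite /= andbT => /and4P[/andP[AS /eqP A2] /andP[BS /eqP B2] /andP[CS /eqP C2] /andP[DS /eqP D2]].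
have [a aS ->] := two_subset_setD1 AS A2; have [b bS ->] := two_subset_setD1 BS B2.
have [c cS ->] := two_subset_setD1 CS C2; have [d dS ->] := two_subset_setD1 DS D2.
rewrite !in_set2 !negb_or !eq_setD1 // => ab /andP[ca cb] /andP[da db]; congr (S :\ _).
have : #|S :\ a :\ b| <= 1.
  have := cardsD1 b (S :\ a); have := cardsD1 a S.
  by rewrite aS S3 in_setD1 eq_sym ab bS !add1n => -[<-] [<-].
by move/card_le1_eqP; apply; rewrite !in_setD1 ?ca ?cb ?da ?db.
Qed.
End ThreeSet.

Section Edges.
Variables (V : finType) (e : rel V).
Hypotheses (e_sym : symmetric e) (e_irr : irreflexive e).

Definition edges : {set {set V}} := [set [set x; y] | x : V, y : V in [set y | e x y]].

Lemma edgeP x y : e x y -> [set x; y] \in edges.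
Proof. by move=> exy; apply/imset2P; exists x y; rewrite ?inE. Qed.

Lemma card_edge A : A \in edges -> #|A| = 2.
Proof.
case/imset2P => x y _; rewrite inE => exy ->.
by rewrite cards2; case: eqVneq exy => // ->; rewrite e_irr.
Qed.

Lemma nonedge_notin_edges u v : u != v -> ~~ e u v -> [set u; v] \notin edges.
Proof.
move=> uv euv; apply/imset2P => -[x y _]; rewrite inE => exy uvE.
have := set21 u v; have := set22 u v; rewrite uvE !in_set2.
case/orP=> /eqP vE /orP[]/eqP uE; subst u v; rewrite ?eqxx ?exy // in uv euv.
by rewrite e_sym exy in euv.
Qed.

(* The order of the two edges depends on [enum]; only the unordered pair is used. *)
Definition transition_edges (t : V * {set V}) : {set V} * {set V} :=
  ([set t.1; nth t.1 (enum t.2) 0], [set t.1; nth t.1 (enum t.2) 1]).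

Lemma transition_edgesE b a c : a != c ->
  transition_edges (b, [set a; c]) = ([set b; a], [set b; c]) \/
  transition_edges (b, [set a; c]) = ([set b; c], [set b; a]).
Proof.
move=> ac; have := enum_uniq [set a; c]; have := mem_enum [set a; c].
have : size (enum [set a; c]) = 2 by rewrite -cardE cards2 ac.
rewrite /transition_edges /=; case: (enum _) => [|x [|y []]] // _ mem_xy.
rewrite /= inE andbT => xy; have := mem_xy x; have := mem_xy y.
rewrite !in_cons !in_set2 !eqxx orbT /= => /esym/orP[]/eqP yE /esym/orP[]/eqP xE;
  subst x y; rewrite ?eqxx // in xy; first [by left | by right].
Qed.

Lemma transition_edges_overlapping t :
  is_transition e t -> overlapping id edges (transition_edges t).
Proof.
case: t => b _ [a [c [ac /= ab bc ->]]].
have ba : e b a by rewrite e_sym.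
have meet : [set b; a] :&: [set b; c] != set0 by apply/set0Pn; exists b; rewrite !inE !eqxx.
by case: (transition_edgesE b ac) => ->; rewrite /overlapping /= !edgeP // setIC.
Qed.

Lemma compat_walk_class (rT : eqType) (T : {set V * {set V}}) (g : {set V} -> rT) :
  (forall t, t \in T -> g (transition_edges t).1 = g (transition_edges t).2) ->
  forall p u x, path e u (x :: p) -> compat T (u :: x :: p) ->
  exists2 A, (A \in edges) && (last x p \in A) & g A = g [set u; x].
Proof.
move=> gT; elim=> [|y p IHp] u x /=.
  by rewrite andbT => ux _; exists [set u; x]; rewrite ?edgeP ?set22.
case/andP=> ux xp /andP[uxy yp]; have [A AE gA] := IHp x y xp yp.
exists A; rewrite // gA; case: (eqVneq u y) uxy => [<- _|uy /= uxy]; first by rewrite setUC.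
have := gT _ uxy; rewrite /trans_of [[set u; x]]setUC.
by case: (transition_edgesE x uy) => -> /= ->.
Qed.

End Edges.

Section CoComponents.
Variables (V : finType) (e : rel V).
Hypothesis e_sym : symmetric e.

Lemma co_components_partition : partition (co_components e) [set: V].
Proof.
have compl_sym : connect_sym (compl_rel e).
  by apply: sym_connect_sym => x y; rewrite /compl_rel /= eq_sym e_sym.
have -> : co_components e = equivalence_partition (connect (compl_rel e)) [set: V].
  apply/setP => C; apply/imsetP/imsetP => -[x _ ->]; exists x => //;
  by apply/setP => y; rewrite !inE.
apply: equivalence_partitionP => x y z _ _ _; split; first exact: connect0.
by move=> xy; apply: same_connect.
Qed.

Lemma tau_add_card_co_components : tau e + #|co_components e| <= #|V|.
Proof.
rewrite -cardsT (card_partition co_components_partition) /tau -sum1_card.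
rewrite big_mkcondr -big_split /=; apply: leq_sum => _ /imsetP[x _ ->].
have : 0 < #|[set y | connect (compl_rel e) x y]|.
  by apply/card_gt0P; exists x; rewrite inE connect0.
by case: ifP => _; [case: ifP => _|]; lia.
Qed.

Lemma card_imset_co_components (rT : finType) (f : V -> rT) :
  (forall u v, compl_rel e u v -> f u = f v) -> #|f @: setT| <= #|co_components e|.
Proof.
move=> f_compl; case: (pickP (@predT V)) => [x0 _|V0]; last first.
  by rewrite (leq_trans (leq_imset_card f _)) // cardsT (eq_card0 V0).
pose h (C : {set V}) := f (odflt x0 [pick y in C]).
apply: leq_trans (leq_imset_card h _); apply/subset_leq_card/subsetP => _ /imsetP[x _ ->].
apply/imsetP; exists [set y | connect (compl_rel e) x y]; first exact: imset_f.
rewrite /h; case: pickP => [y|/(_ x)]; last by rewrite inE connect0.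
rewrite inE => xy; suff: y \in [pred z | f z == f x] by move/eqP.
by rewrite -(closed_connect _ xy) ?inE // => u v /f_compl uv; rewrite !inE uv.
Qed.

End CoComponents.

Section ClassPairs.
Variables (V : finType) (e : rel V).
Hypotheses (e_sym : symmetric e) (e_irr : irreflexive e).

(* Applied to the vertex set [S] of an edge class: a star if [#|S| >= 4], the only possible
   non-edge if [#|S| = 3], nothing if [S] is a single edge. *)
Definition class_pairs (S : {set V}) : seq (V * V) :=
  if 4 <= #|S| then
    if [pick w in S] is Some w then [seq (w, v) | v <- enum (S :\ w)] else [::]
  else if #|S| == 3 then
    if [pick uv | [&& uv.1 \in S, uv.2 \in S & compl_rel e uv.1 uv.2]] is Some uv
    then [:: uv] else [::]
  else [::].

Lemma size_class_pairs (S : {set V}) : 2 <= #|S| -> 2 * size (class_pairs S) + 6 <= 3 * #|S|.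
Proof.
rewrite /class_pairs; case: ifP => [S4 _|/negbT S4 S2].
  case: pickP => [w wS|_] /=; last by lia.
  by rewrite size_map -cardE; have := cardsD1 w S; rewrite wS; lia.
by case: ifP => [/eqP S3|_]; [case: pickP => [uv _|_]|]; rewrite /=; lia.
Qed.

Lemma class_pairs_identify (rT : eqType) (f : V -> rT) (S A : {set V}) :
  A \in edges e -> A \subset S ->
  (3 <= #|S| -> exists2 B, B \in edges e & (B \subset S) && (B != A)) ->
  {in class_pairs S, forall p, f p.1 = f p.2} ->
  {in S &, forall u v, compl_rel e u v -> f u = f v}.
Proof.
move=> AE AS other_edge f_pairs u v uS vS uv_compl.
have S2 : 2 <= #|S| by rewrite -(card_edge e_irr AE) subset_leq_card.
have compl_notin X x y : X \in edges e -> compl_rel e x y -> [set x; y] != X.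
  by move=> XE /andP[xy exy]; apply: contraNneq (nonedge_notin_edges e_sym xy exy) => ->.
move: f_pairs; rewrite /class_pairs; case: ifP => [S4|/negbT S4].
  case: pickP => [w wS f_pairs|/(_ u)]; last by rewrite uS.
  have star y : y \in S -> f w = f y.
    move=> yS; case: (eqVneq y w) => [->//|yw].
    by apply: (f_pairs (w, y)); apply/map_f; rewrite mem_enum in_setD1 yw.
  by rewrite -(star u uS) -(star v vS).
case: eqP => [S3|S3 _]; last first.
  have AeqS : A = S by apply/eqP; rewrite eqEcard AS (card_edge e_irr AE); lia.
  case/andP: (uv_compl) => uv _; have := compl_notin A u v AE uv_compl.
  by rewrite AeqS eqEcard cards2 uv subUset !sub1set uS vS; lia.
have [B BE /andP[BS BA]] := other_edge (eq_leq (esym S3)).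
case: pickP => [[a b] /= /and3P[aS bS ab_compl] f_pairs|/(_ (u, v))]; last first.
  by rewrite /= uS vS uv_compl.
have pair2 x y : x \in S -> y \in S -> compl_rel e x y ->
    ([set x; y] \subset S) && (#|[set x; y]| == 2).
  by move=> xS yS /andP[xy _]; rewrite subUset !sub1set xS yS cards2 xy.
have notin_AB x y : compl_rel e x y -> [set x; y] \notin [set B; A].
  by move=> xy; rewrite in_set2 negb_or !compl_notin.
have uv_ab : [set u; v] = [set a; b].
  apply: (eq_two_subsets S3) BA (notin_AB _ _ uv_compl) (notin_AB _ _ ab_compl).
  by rewrite /= BS AS (card_edge e_irr BE) (card_edge e_irr AE) !pair2.
have f_ab := f_pairs (a, b) (mem_head _ _).
have := set21 u v; have := set22 u v; rewrite uv_ab !in_set2.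
by case/orP=> /eqP-> /orP[]/eqP->.
Qed.
End ClassPairs.

Section EdgeClasses.
Variables (V : finType) (e : rel V) (T : {set V * {set V}}).
Hypotheses (e_sym : symmetric e) (e_irr : irreflexive e).

Definition edge_class : {set V} -> {set V} :=
  unite_seq [seq transition_edges t | t <- enum T].

Definition class_cover : {set V} -> {set V} := cover_fiber id (edges e) edge_class.

Definition classes : {set {set V}} := edge_class @: edges e.

Definition vertex_pairs : seq (V * V) :=
  flatten [seq class_pairs e (class_cover r) | r <- enum classes].

Lemma edge_class_transition t :
  t \in T -> edge_class (transition_edges t).1 = edge_class (transition_edges t).2.
Proof. by move=> tT; apply: unite_seq_mem; apply: map_f; rewrite mem_enum. Qed.

Lemma sum_card_class_cover : transition_set e T ->
  \sum_(r in classes) #|class_cover r| <= 2 * #|classes| + #|T|.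
Proof.
move=> T_trans.
have overlap : all (overlapping id (edges e)) [seq transition_edges t | t <- enum T].
  apply/allP => p /mapP[t]; rewrite mem_enum => /T_trans t_tr ->.
  exact: transition_edges_overlapping.
have := cover_fiber_unite_seq overlap.
have -> : \sum_(A in edges e) #|A| = 2 * #|edges e|.
  by rewrite mulnC -sum_nat_const; apply: eq_bigr => A /(card_edge e_irr).
have := card_unite_seq_imset [seq transition_edges t | t <- enum T] (edges e).
rewrite -/edge_class -/classes -/class_cover size_map -cardE => le_E le_S.
rewrite -(leq_add2r #|edges e|) (leq_trans le_S) //.
(* Naming the cardinalities lets lia identify their differently elaborated copies. *)
by move: le_E; set E := #|edges e|; set C := #|classes|; set n := #|T|; lia.
Qed.

Lemma class_cover_edge A : A \in edges e -> A \subset class_cover (edge_class A).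
Proof. exact: sub_cover_fiber. Qed.

Lemma class_cover_other_edge A : A \in edges e -> 3 <= #|class_cover (edge_class A)| ->
  exists2 B, B \in edges e & (B \subset class_cover (edge_class A)) && (B != A).
Proof.
move=> AE; rewrite -(card_edge e_irr AE) => /(cover_fiber_other AE)[B /andP[BE /eqP BA] B_A].
by exists B; rewrite // B_A andbT -BA class_cover_edge.
Qed.

Lemma size_vertex_pairs :
  2 * size vertex_pairs + 6 * #|classes| <= 3 * \sum_(r in classes) #|class_cover r|.
Proof.
rewrite size_flatten /shape -map_comp sumnE big_map big_enum /= big_distrr mulnC.
rewrite -sum_nat_const big_distrr -big_split /=; apply: leq_sum => _ /imsetP[A AE ->].
apply: size_class_pairs.
by rewrite -(card_edge e_irr AE); apply/subset_leq_card/class_cover_edge.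
Qed.

Lemma unite_vertex_pairs_compl : T_connected e T ->
  forall u v, compl_rel e u v -> unite_seq vertex_pairs u = unite_seq vertex_pairs v.
Proof.
move=> T_conn u v uv_compl; have [[|x p] [walk [/= last_v compat_uv]]] := T_conn u v.
  by move: uv_compl; rewrite last_v /compl_rel /= eqxx.
have [A /andP[AE vA] classA] := compat_walk_class edge_class_transition walk compat_uv.
have uxE : [set u; x] \in edges e by apply: edgeP; case/andP: walk.
apply: (class_pairs_identify e_sym e_irr uxE (class_cover_edge uxE)).
- exact: class_cover_other_edge.
- move=> q q_pairs; apply: unite_seq_mem; apply/flatten_mapP.
  by exists (edge_class [set u; x]); rewrite // mem_enum imset_f.
- by apply/(subsetP (class_cover_edge uxE)); rewrite set21.
- by rewrite -classA; apply/(subsetP (class_cover_edge AE)); rewrite -last_v.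
- exact: uv_compl.
Qed.

Lemma tau_le_size_vertex_pairs : T_connected e T -> tau e <= size vertex_pairs.
Proof.
move=> T_conn.
have := card_imset_co_components (unite_vertex_pairs_compl T_conn).
have := card_unite_seq_imset vertex_pairs setT.
have := tau_add_card_co_components e_sym.
rewrite cardsT; lia.
Qed.

End EdgeClasses.

Lemma tau_le_connecting_transition_set (V : finType) (e : rel V) (T : {set V * {set V}}) :
  simple_graph e -> connecting_transition_set e T -> 2 * tau e <= 3 * #|T|.
Proof.
move=> [e_sym e_irr] [T_trans T_conn].
have := sum_card_class_cover e_sym e_irr T_trans.
have := size_vertex_pairs T e_irr.
have := tau_le_size_vertex_pairs e_sym e_irr T_conn.
lia.
Qed.

Theorem theorem7 (V : finType) (e : rel V) (T : {set V * {set V}}) :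
  simple_graph e -> graph_connected e -> 2 <= #|V| ->
  min_connecting_transition_set e T ->
  2 * tau e <= 3 * #|T|.
Proof. by move=> simple_e _ _ [connecting_T _]; apply: tau_le_connecting_transition_set. Qed.
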